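(* Let $\gamma_1\in\Gamma/\Psi$. The graded module $\mathrm{gr}_{\mathcal F(\gamma_1)}\mathcal P_{\gamma_1}/\mathcal P_{\gamma_1}^+=\bigoplus_{\gamma\in q^{-1}(\gamma_1)}\mathcal P_\gamma/\mathcal P_\gamma^+$ is a finitely generated module over $\mathrm{gr}_{\bar\nu}R/P=\bigoplus_{\delta\in\Psi,\ \delta\ge 0}\mathcal P_\delta/\mathcal P_\delta^+$ if and only if the set $$F_{\gamma_1}=\{\nu(f)\mid f\in R,\ \nu_1(f)=\gamma_1\}$$ is a finitely generated module over the semigroup $\bar F=\bar\nu\big((R/P)\setminus\{0\}\big)$.
   Context: Let $(R,m)$ be a noetherian local domain with residue field $K$, and let $\nu$ be a valuation of the fraction field of $R$ with valuation ring $(R_\nu,m_\nu)$ such that $R\subset R_\nu$, $m_\nu\cap R=m$, and the residual map $R/m\to R_\nu/m_\nu$ is an isomorphism. Let $\Gamma$ be the value group of $\nu$, assumed of finite rank, let $\Psi\subset\Gamma$ be the smallest nonzero convex subgroup (the convex subgroup of rank one), and let $q\colon\Gamma\to\Gamma/\Psi$ be the quotient map. Let $\nu_1=q\circ\nu$ be the valuation (with values in $\Gamma/\Psi$) with which $\nu$ is composed, let $P=\{f\in R\mid \nu_1(f)>0\}$ be its center on $R$, and let $\bar\nu$ be the residual valuation on $R/P$, given by $\bar\nu(f \bmod P)=\nu(f)\in\Psi$ for $f\in R\setminus P$. For $\gamma\in\Gamma$ put $\mathcal P_\gamma=\{f\in R\mid\nu(f)\ge\gamma\}$, $\mathcal P_\gamma^+=\{f\in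 R\mid \nu(f)>\gamma\}$; for $\gamma_1\in\Gamma/\Psi$ put $\mathcal P_{\gamma_1}=\{f\in R\mid \nu_1(f)\ge\gamma_1\}$, $\mathcal P_{\gamma_1}^+=\{f\in R\mid\nu_1(f)>\gamma_1\}$. The ring $\mathrm{gr}_{\bar\nu}R/P=\bigoplus_{\delta\in\Psi,\delta\ge0}\mathcal P_\delta/\mathcal P_\delta^+$ is the graded ring of $R/P$ for $\bar\nu$, and $\bigoplus_{\gamma\in q^{-1}(\gamma_1)}\mathcal P_\gamma/\mathcal P_\gamma^+$ (the graded module associated to the filtration of $\mathcal P_{\gamma_1}/\mathcal P^+_{\gamma_1}$ by the images of the $\mathcal P_\gamma$, $\gamma\in q^{-1}(\gamma_1)$) is a graded module over it via the multiplication maps $\mathcal P_\delta/\mathcal P_\delta^+\times\mathcal P_\gamma/\mathcal P_\gamma^+\to\mathcal P_{\delta+\gamma}/\mathcal P_{\delta+\gamma}^+$. If $S$ is a commutative semigroup, a subset $F$ of $\Gamma$ with $S+F\subseteq F$ is an $S$-module; it is finitely generated if there are $m_1,\dots,m_k\in F$ with $F=\bigcup_{i=1}^k(S+m_i)$. *)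

From HB Require Import structures.
From mathcomp Require Import all_boot all_order all_algebra.
From mathcomp Require Import fraction.
Set Implicit Arguments. Unset Strict Implicit. Unset Printing Implicit Defensive.
Import Order.TTheory GRing.Theory Num.Theory.
Local Open Scope ring_scope.

Definition is_ideal (R : comNzRingType) (I : R -> Prop) : Prop :=
  [/\ I 0, (forall x y, I x -> I y -> I (x + y)) & (forall a x, I x -> I (a * x))].

Definition fg_ideal (R : comNzRingType) (I : R -> Prop) : Prop :=
  exists s : seq R, forall x, I x <->
    exists c : seq R, size c = size s /\ x = \sum_(i < size s) c`_i * s`_i.

Definition noetherian (R : comNzRingType) : Prop :=
  forall I : R -> Prop, is_ideal I -> fg_ideal I.

(* local ring: the non-units form an ideal (the unique maximal ideal m) *)
Definition local_ring (R : comUnitRingType) : Prop :=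
  forall x y : R, x \isn't a GRing.unit -> y \isn't a GRing.unit ->
    (x + y) \isn't a GRing.unit.

Definition ordered_group (G : porderZmodType) : Prop :=
  (forall x y : G, (x <= y) || (y <= x)) /\
  (forall x y z : G, x <= y -> x + z <= y + z).

Definition is_subgroup (G : porderZmodType) (H : G -> Prop) : Prop :=
  H 0 /\ (forall x y, H x -> H y -> H (x - y)).

Definition convex_subgroup (G : porderZmodType) (H : G -> Prop) : Prop :=
  is_subgroup H /\ (forall x y, H y -> 0 <= x -> x <= y -> H x).

Definition finite_rank (G : porderZmodType) : Prop :=
  exists (n : nat) (Hs : nat -> G -> Prop), forall H : G -> Prop,
    convex_subgroup H -> exists i, (i < n)%N /\ forall x, H x <-> Hs i x.

Definition smallest_nonzero_convex (G : porderZmodType) (Psi : G -> Prop) : Prop :=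
  [/\ convex_subgroup Psi, (exists x, Psi x /\ x <> 0) &
      (forall H : G -> Prop, convex_subgroup H -> (exists x, H x /\ x <> 0) ->
         forall x, Psi x -> H x)].

Section Val.
Variables (G : porderZmodType) (R : idomainType).
Variable nu : {fraction R} -> G.  (* value at 0 is irrelevant: nu(0) = +oo *)

Definition valuation : Prop :=
  (forall x y, x != 0 -> y != 0 -> nu (x * y) = nu x + nu y) /\
  (forall x y, x != 0 -> y != 0 -> x + y != 0 ->
     nu x <= nu (x + y) \/ nu y <= nu (x + y)).

Definition value_group : Prop := forall g : G, exists x, x != 0 /\ nu x = g.

Definition in_Rnu (x : {fraction R}) : Prop := x = 0 \/ 0 <= nu x.
Definition in_mnu (x : {fraction R}) : Prop := x = 0 \/ 0 < nu x.

(* R ⊂ R_nu, m_nu ∩ R = m (= non-units), and R/m -> R_nu/m_nu onto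
   (it is automatically injective by the second condition) *)
Definition centered_residually_rational : Prop :=
  [/\ (forall r : R, in_Rnu ((FracField.tofrac r))),
      (forall r : R, in_mnu ((FracField.tofrac r)) <-> r \isn't a GRing.unit) &
      (forall x, in_Rnu x -> exists r : R, in_mnu (x - (FracField.tofrac r)))].

Definition vR (f : R) : G := nu (FracField.tofrac f).

Definition Pge (g : G) (f : R) : Prop := f = 0 \/ g <= vR f.
Definition Pgt (g : G) (f : R) : Prop := f = 0 \/ g < vR f.

Variable Psi : G -> Prop.

(* order on G/Psi: q a < q b iff a < b and b - a \notin Psi (Psi convex) *)
(* center P of nu_1 = q o nu:  nu_1(f) > 0 *)
Definition inP (f : R) : Prop := f = 0 \/ (0 < vR f /\ ~ Psi (vR f)).

(* gamma_1 = q g1 ; nu_1(f) = gamma_1 *)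
Definition nu1_eq (g1 : G) (f : R) : Prop := f <> 0 /\ Psi (vR f - g1).

(* ---- graded objects: an element of a direct sum  (+)_gamma P_gamma/P_gamma^+
   is represented by a finite list of homogeneous pieces (degree, representative);
   its gamma-component is the class of the sum of the representatives of degree gamma. *)
Definition component (m : seq (G * R)) (g : G) : R :=
  \sum_(p <- m | p.1 == g) p.2.

(* element of gr_{nubar} R/P = (+)_{delta in Psi, delta >= 0} P_delta/P_delta^+ *)
Definition gr_ring_elt (a : seq (G * R)) : Prop :=
  forall p, p \in a -> [/\ Psi p.1, 0 <= p.1 & Pge p.1 p.2].

(* element of (+)_{gamma in q^-1(gamma_1)} P_gamma/P_gamma^+ *)
Definition gr_mod_elt (g1 : G) (m : seq (G * R)) : Prop :=
  forall p, p \in m -> Psi (p.1 - g1) /\ Pge p.1 p.2.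

Definition gr_eq (m m' : seq (G * R)) : Prop :=
  forall g, Pgt g (component m g - component m' g).

(* module action (multiplication maps P_d/P_d^+ x P_g/P_g^+ -> P_{d+g}/P_{d+g}^+) *)
Definition gr_scale (a m : seq (G * R)) : seq (G * R) :=
  [seq (p.1 + q.1, p.2 * q.2) | p <- a, q <- m].

Definition gr_lincomb (rs ms : seq (seq (G * R))) : seq (G * R) :=
  flatten [seq gr_scale pr.1 pr.2 | pr <- zip rs ms].

Definition gr_module_fg (g1 : G) : Prop :=
  exists ms : seq (seq (G * R)),
    (forall m, m \in ms -> gr_mod_elt g1 m) /\
    forall m, gr_mod_elt g1 m ->
      exists rs : seq (seq (G * R)),
        [/\ size rs = size ms, (forall a, a \in rs -> gr_ring_elt a) &
            gr_eq m (gr_lincomb rs ms)].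

(* semigroup Fbar = nubar((R/P) \ {0}) and F_{gamma_1} *)
Definition Fbar (x : G) : Prop := exists f : R, ~ inP f /\ vR f = x.
Definition Fset (g1 : G) (x : G) : Prop := exists f : R, nu1_eq g1 f /\ vR f = x.

End Val.

Definition sg_module (G : porderZmodType) (S F : G -> Prop) : Prop :=
  forall s x, S s -> F x -> F (s + x).

Definition sg_module_fg (G : porderZmodType) (S F : G -> Prop) : Prop :=
  sg_module S F /\
  exists ms : seq G, (forall m, m \in ms -> F m) /\
    forall x, F x <-> exists m, m \in ms /\ exists s, S s /\ x = s + m.

From HB Require Import structures.
From mathcomp Require Import all_boot all_order all_algebra.
From mathcomp Require Import fraction.
From Stdlib Require Import Classical.
Import Order.TTheory GRing.Theory Num.Theory.

Set Implicit Arguments. Unset Strict Implicit. Unset Printing Implicit Defensive.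
Local Open Scope ring_scope.

(* Two facts do the work:
   - (support) if a combination  sum_i a_i * m_i  of module elements with
     ring coefficients is nonzero in degree x, some product of a piece of
     a_i by a component of m_i is nonzero in degree x; as values are at
     least degrees, both factors then have value equal to their degree,
     so x = delta + q with delta in Fbar and q a degree of m_i lying in
     F_{gamma_1} (lincomb_support).  Hence the degrees of the generators
     lying in F_{gamma_1} generate F_{gamma_1} over Fbar.
   - (approximation) as R and R_nu have the same residue field, for nonzero
     y, w in R of equal value there is r in R with nu(y - r w) > nu(y)
     (residue_approx).  So if F_{gamma_1} = U_j (Fbar + nu(f_j)), a piece y
     of degree nu(h) + nu(f_j), nu(h) in Fbar, is (class of r h) times
     (class of f_j) in the graded module. *)

Section OrderedGroup.
Variable G : porderZmodType.
Hypothesis oG : ordered_group G.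

Lemma og_leD2r (x y z : G) : x <= y -> x + z <= y + z.
Proof. by case: oG => _; apply. Qed.

Lemma og_ltD2r (x y z : G) : x < y -> x + z < y + z.
Proof.
rewrite !lt_def => /andP[ne le]; rewrite og_leD2r // andbT.
by apply: contra ne => /eqP/addIr ->.
Qed.

Lemma og_leNgt (x y : G) : ~ (x < y) -> y <= x.
Proof.
case: oG => tot _ nlt; case/orP: (tot x y) => // le.
by move: le; rewrite le_eqVlt => /orP[/eqP->|/nlt].
Qed.

(* if a <= u, b <= v and u + v <= a + b, both inequalities are equalities;
   this pins down the values of the factors of a product (sharp_product) *)
Lemma og_addle_eql (a b u v : G) : a <= u -> b <= v -> u + v <= a + b -> u = a.
Proof.
move=> au bv le; apply/eqP; apply: contraT => ne.
have lt : a < u by rewrite lt_def ne au.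
have ubv : u + b <= u + v by rewrite ![u + _]addrC og_leD2r.
by have := lt_le_trans (og_ltD2r b lt) (le_trans ubv le); rewrite ltxx.
Qed.

Lemma og_addle_eq (a b u v : G) :
  a <= u -> b <= v -> u + v <= a + b -> u = a /\ v = b.
Proof.
move=> au bv le; split; first exact: og_addle_eql le.
by apply: og_addle_eql bv au _; rewrite addrC [b + _]addrC.
Qed.

End OrderedGroup.

Section Subgroup.
Variables (G : porderZmodType) (H : G -> Prop).
Hypothesis subH : is_subgroup H.

Lemma subgroup0 : H 0.
Proof. by case: subH. Qed.

Lemma subgroupD (x y : G) : H x -> H y -> H (x + y).
Proof.
case: subH => H0 subB hx hy.
by rewrite -[y]opprK -[- y]add0r; apply: (subB) => //; apply: (subB).
Qed.

End Subgroup.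

Lemma mem_zipP (T1 T2 : eqType) (s : seq T1) (t : seq T2) a b :
  (a, b) \in zip s t -> a \in s /\ b \in t.
Proof.
elim: s t => [|x s IH] [|y t] //=; rewrite inE => /orP[/eqP[-> ->]|/IH[h1 h2]].
  by rewrite !inE !eqxx.
by rewrite !inE h1 h2 !orbT.
Qed.

Lemma exists_filter (T : eqType) (s : seq T) (P : T -> Prop) :
  exists s' : seq T, (forall x, x \in s' -> P x) /\ (forall x, x \in s -> P x -> x \in s').
Proof.
elim: s => [|a s [s' [H1 H2]]]; first by exists [::].
case: (classic (P a)) => Pa.
  exists (a :: s'); split; first by move=> x; rewrite inE => /orP[/eqP->|/H1].
  by move=> x; rewrite !inE => /orP[->//|xs Px]; rewrite H2 ?orbT.
by exists s'; split => // x; rewrite inE => /orP[/eqP->//|xs]; apply: H2.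
Qed.

Lemma exists_witnesses (T U : eqType) (s : seq T) (Q : T -> U -> Prop) (P : U -> Prop) :
  (forall x, x \in s -> exists f, P f /\ Q x f) ->
  exists fs : seq U, (forall f, f \in fs -> P f) /\
                     (forall x, x \in s -> exists f, f \in fs /\ Q x f).
Proof.
elim: s => [|a s IH] H; first by exists [::].
have [fs [Pfs Qfs]] := IH (fun x xs => H x (mem_behead (s := a :: s) xs)).
have [f [Pf Qf]] := H a (mem_head _ _).
exists (f :: fs); split; first by move=> g; rewrite inE => /orP[/eqP->|/Pfs].
move=> x; rewrite inE => /orP[/eqP->|/Qfs[g [gin Qg]]]; first by exists f; rewrite mem_head.
by exists g; rewrite inE gin orbT.
Qed.

Section GradedLists.
Variables (G : porderZmodType) (R : idomainType).
Implicit Types (a m : seq (G * R)) (rs ms : seq (seq (G * R))).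

Lemma component1 (x : G) (y : R) g : component [:: (x, y)] g = if x == g then y else 0.
Proof. by rewrite /component big_cons big_nil; case: (x == g); rewrite ?addr0. Qed.

Lemma component_cat m m' g : component (m ++ m') g = component m g + component m' g.
Proof. by rewrite /component big_cat. Qed.

Lemma component_supp m g : component m g != 0 -> exists q, q \in m /\ q.1 = g.
Proof.
elim: m => [|q m IH]; first by rewrite /component big_nil eqxx.
rewrite /component big_cons; case: (q.1 =P g) => [e|_] H.
  by exists q; rewrite mem_head.
by have [p [pin e]] := IH H; exists p; rewrite inE pin orbT.
Qed.

Lemma component_scale a m g :
  component (gr_scale a m) g = \sum_(p <- a) p.2 * component m (g - p.1).
Proof.
rewrite /component /gr_scale big_mkcond big_allpairs_dep /=.
apply: eq_bigr => p _; rewrite big_distrr /= [RHS]big_mkcond /=.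
apply: eq_bigr => q _; have -> : (p.1 + q.1 == g) = (q.1 == g - p.1).
  by apply/eqP/eqP => [<-|->]; rewrite ?[p.1 + _]addrC ?addrK // subrK.
by case: ifP; rewrite ?mulr0.
Qed.

Lemma component_lincomb rs ms g :
  component (gr_lincomb rs ms) g =
  \sum_(pr <- zip rs ms) \sum_(p <- pr.1) p.2 * component pr.2 (g - p.1).
Proof.
rewrite /gr_lincomb; elim: (zip rs ms) => [|pr l IH].
  by rewrite big_nil /component big_nil.
by rewrite /= component_cat IH big_cons component_scale.
Qed.

Lemma lincomb_cons a m rs ms :
  gr_lincomb (a :: rs) (m :: ms) = gr_scale a m ++ gr_lincomb rs ms.
Proof. by []. Qed.

Lemma lincomb0 ms n : gr_lincomb (nseq n [::]) ms = [::].
Proof. by elim: n ms => [|n IH] [|m ms] //; rewrite lincomb_cons IH. Qed.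

Lemma lincomb_single ms a i : (i < size ms)%N ->
  exists rs, [/\ size rs = size ms, (forall b, b \in rs -> b = [::] \/ b = a) &
                 gr_lincomb rs ms = gr_scale a (nth [::] ms i)].
Proof.
elim: ms i => [|m ms IH] [|i] //= lt.
  exists (a :: nseq (size ms) [::]); split; first by rewrite /= size_nseq.
    by move=> b; rewrite inE => /orP[/eqP->|/nseqP[-> _]]; [right|left].
  by rewrite lincomb_cons lincomb0 cats0.
have [rs [s1 s2 s3]] := IH i lt.
exists ([::] :: rs); split; first by rewrite /= s1.
  by move=> b; rewrite inE => /orP[/eqP->|/s2]; [left|].
by rewrite lincomb_cons s3.
Qed.

Lemma component_lincombD ms rs1 rs2 g :
  size rs1 = size ms -> size rs2 = size ms ->
  component (gr_lincomb [seq pr.1 ++ pr.2 | pr <- zip rs1 rs2] ms) g =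
  component (gr_lincomb rs1 ms) g + component (gr_lincomb rs2 ms) g.
Proof.
elim: ms rs1 rs2 => [|m ms IH] [|r1 rs1] [|r2 rs2] //=.
  by move=> _ _; rewrite /gr_lincomb /= /component big_nil addr0.
case=> e1 [] e2; rewrite !lincomb_cons !component_cat IH //.
by rewrite /gr_scale allpairs_cat component_cat addrACA.
Qed.

End GradedLists.

Section Valuation.
Variables (G : porderZmodType) (R : idomainType) (nu : {fraction R} -> G).
Hypotheses (vnu : valuation nu) (cnu : centered_residually_rational nu).

Lemma vR_mul (f g : R) : f != 0 -> g != 0 -> vR nu (f * g) = vR nu f + vR nu g.
Proof. by case: vnu => mulV _ nf ng; rewrite /vR tofracM mulV // tofrac_eq0. Qed.

Lemma vR_ge0 (f : R) : f != 0 -> 0 <= vR nu f.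
Proof.
case: cnu => inR _ _ nf; case: (inR f) => // /eqP.
by rewrite tofrac_eq0 (negbTE nf).
Qed.

Lemma vR_add_upclosed (P : G -> Prop) : (forall a b, P a -> a <= b -> P b) ->
  forall f g : R, f = 0 \/ P (vR nu f) -> g = 0 \/ P (vR nu g) ->
  f + g = 0 \/ P (vR nu (f + g)).
Proof.
move=> Pup f g [->|Pf]; first by rewrite add0r.
case=> [->|Pg]; first by rewrite addr0; right.
have [->|nfg] := eqVneq (f + g) 0; first by left.
have [->|nf] := eqVneq f 0; first by rewrite add0r; right.
have [->|ng] := eqVneq g 0; first by rewrite addr0; right.
case: vnu => _ addV; right; rewrite /vR tofracD.
by case: (addV (tofrac f) (tofrac g)); rewrite -?tofracD ?tofrac_eq0 //;
  [apply: Pup Pf | apply: Pup Pg].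
Qed.

Lemma Pge_add (x : G) (f g : R) : Pge nu x f -> Pge nu x g -> Pge nu x (f + g).
Proof. by apply: (vR_add_upclosed (P := fun v => x <= v)) => a b; apply: le_trans. Qed.

Lemma Pgt_add (x : G) (f g : R) : Pgt nu x f -> Pgt nu x g -> Pgt nu x (f + g).
Proof. by apply: (vR_add_upclosed (P := fun v => x < v)) => a b; apply: lt_le_trans. Qed.

Lemma Pgt_sumN (T : eqType) (s : seq T) (F : T -> R) (x : G) :
  ~ Pgt nu x (\sum_(i <- s) F i) -> exists i, i \in s /\ ~ Pgt nu x (F i).
Proof.
elim: s => [|a s IH]; first by rewrite big_nil => H; case: H; left.
rewrite big_cons => H; case: (classic (Pgt nu x (F a))) => Ha.
  have [i [iin Hi]] : exists i, i \in s /\ ~ Pgt nu x (F i).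
    by apply: IH => Hs; apply: H; apply: Pgt_add.
  by exists i; rewrite inE iin orbT.
by exists a; rewrite mem_head.
Qed.

Lemma component_Pge (m : seq (G * R)) (g : G) :
  (forall q, q \in m -> Pge nu q.1 q.2) -> Pge nu g (component m g).
Proof.
elim: m => [|q m IH] H; first by rewrite /component big_nil; left.
have Hm : Pge nu g (component m g) by apply: IH => p pin; apply: H; rewrite inE pin orbT.
rewrite /component big_cons -/(component m g); case: eqP => [e|_] //.
by apply: Pge_add => //; rewrite -e; apply: H; rewrite mem_head.
Qed.

Lemma gr_eq_lincomb_cat (ms rs rs' : seq (seq (G * R))) (m m' : seq (G * R)) :
  size rs = size ms -> size rs' = size ms ->
  gr_eq nu m (gr_lincomb rs ms) -> gr_eq nu m' (gr_lincomb rs' ms) ->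
  gr_eq nu (m ++ m') (gr_lincomb [seq pr.1 ++ pr.2 | pr <- zip rs rs'] ms).
Proof.
move=> szrs szrs' eqm eqm' g.
rewrite component_lincombD // component_cat opprD addrACA.
exact: Pgt_add (eqm g) (eqm' g).
Qed.

Hypothesis oG : ordered_group G.

(* residual rationality: an element of value nu(y) is, modulo P_{nu(y)}^+,
   a multiple of any other element of the same value *)
Lemma residue_approx (y w : R) : y != 0 -> w != 0 -> vR nu y = vR nu w ->
  exists r : R, Pgt nu (vR nu y) (y - r * w).
Proof.
move=> ny nw vyw; case: cnu => _ _ res.
have tnw : tofrac w != 0 by rewrite tofrac_eq0.
pose z := tofrac y / tofrac w.
have zw : z * tofrac w = tofrac y by rewrite divfK.
have nz : z != 0 by rewrite mulf_neq0 ?invr_neq0 // tofrac_eq0.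
have vz : nu z = 0.
  have := vnu.1 _ _ nz tnw; rewrite zw -/(vR nu y) -/(vR nu w) vyw.
  by move=> e; apply: (@addIr _ (vR nu w)); rewrite add0r -e.
have [r Hr] : exists r, in_mnu nu (z - tofrac r) by apply: res; right; rewrite vz.
exists r; have key : tofrac (y - r * w) = (z - tofrac r) * tofrac w.
  by rewrite mulrBl zw tofracB tofracM.
have [->|nyrw] := eqVneq (y - r * w) 0; first by left.
have nzr : z - tofrac r != 0.
  by apply: contra nyrw => /eqP e; rewrite -tofrac_eq0 key e mul0r.
case: Hr => [zr|vzr]; first by move: nzr; rewrite zr eqxx.
right; rewrite vyw /vR key vnu.1 // -/(vR nu w).
by have := og_ltD2r oG (vR nu w) vzr; rewrite add0r.
Qed.

End Valuation.

Section Characterization.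
Variables (G : porderZmodType) (R : idomainType) (nu : {fraction R} -> G).
Variables (Psi : G -> Prop) (g1 : G).
Hypotheses (oG : ordered_group G) (vnu : valuation nu).
Hypotheses (cnu : centered_residually_rational nu) (subPsi : is_subgroup Psi).

Lemma FbarP (s : G) :
  Fbar nu Psi s <-> exists h : R, [/\ h != 0, Psi (vR nu h) & vR nu h = s].
Proof.
split=> [[h [nP <-]]|[h [nh ph <-]]]; last first.
  by exists h; split => //; case=> [/eqP|[_ //]]; rewrite (negbTE nh).
have nh : h != 0 by apply/eqP => h0; apply: nP; left.
exists h; split => //; apply: NNPP => nps; apply: nP; right; split => //.
rewrite lt_def vR_ge0 // andbT; apply: contra_notN nps => /eqP ->.
exact: subgroup0.
Qed.

Lemma Fset_module : sg_module (Fbar nu Psi) (Fset nu Psi g1).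
Proof.
move=> s x /FbarP[h [nh ph <-]] [f [[nf pf] <-]].
have nf' : f != 0 by apply/eqP.
exists (h * f); split; last by rewrite vR_mul.
split; first by apply/eqP; rewrite mulf_neq0.
by rewrite vR_mul // -addrA; apply: subgroupD.
Qed.

Lemma sharp_product (d e : G) (u c : R) :
  Pge nu d u -> Pge nu e c -> ~ Pgt nu (d + e) (u * c) ->
  [/\ u != 0, c != 0, vR nu u = d & vR nu c = e].
Proof.
move=> du ec nuc.
have nzuc : u * c != 0 by apply/eqP => uc0; apply: nuc; left.
have /andP[nu0 nc0] : (u != 0) && (c != 0) by rewrite -negb_or -mulf_eq0.
have leuc : vR nu u + vR nu c <= d + e.
  by rewrite -vR_mul //; apply: og_leNgt => // lt; apply: nuc; right.
have du' : d <= vR nu u by case: du => // /eqP; rewrite (negbTE nu0).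
have ec' : e <= vR nu c by case: ec => // /eqP; rewrite (negbTE nc0).
by have [] := og_addle_eq oG du' ec' leuc.
Qed.

Lemma lincomb_support (rs ms : seq (seq (G * R))) (x : G) :
  (forall a, a \in rs -> gr_ring_elt nu Psi a) ->
  (forall m, m \in ms -> gr_mod_elt nu Psi g1 m) ->
  ~ Pgt nu x (component (gr_lincomb rs ms) x) ->
  exists2 m, m \in ms &
    exists2 q, q \in m & Fset nu Psi g1 q.1 /\ Fbar nu Psi (x - q.1).
Proof.
move=> Hrs Hms; rewrite component_lincomb => /(Pgt_sumN vnu)[[a m] [amin]].
move=> /(Pgt_sumN vnu)[p [pin np]]; have [ain min] := mem_zipP amin.
have [Psip _ p2ge] := Hrs a ain p pin.
set c := component m (x - p.1) in np.
have cge : Pge nu (x - p.1) c by apply: component_Pge => // q /(Hms m min)[].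
have [np2 nc vp2 vc] : [/\ p.2 != 0, c != 0, vR nu p.2 = p.1 & vR nu c = x - p.1].
  by apply: sharp_product p2ge cge _; rewrite addrC subrK.
have [q [qin q1]] := component_supp nc.
exists m => //; exists q => //; split.
  exists c; split; last by rewrite vc q1.
  by split; [apply/eqP | rewrite vc -q1; case: (Hms m min q qin)].
by apply/FbarP; exists p.2; rewrite vp2 q1 subKr.
Qed.

(* module generators m_1..m_k: the degrees of their pieces that lie in
   F_{gamma_1} generate F_{gamma_1} over Fbar *)
Lemma semigroup_fg_of_module_fg :
  gr_module_fg nu Psi g1 -> sg_module_fg (Fbar nu Psi) (Fset nu Psi g1).
Proof.
move=> [ms [Hms Hgen]]; split; first exact: Fset_module.
have [gens [Fgens gensP]] :=
  exists_filter (flatten [seq map fst m | m <- ms]) (Fset nu Psi g1).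
exists gens; split => // x; split; last first.
  by move=> [d [din [s [Fs ->]]]]; apply: Fset_module => //; apply: Fgens.
move=> [f [[nf pf] vf]].
have Hm : gr_mod_elt nu Psi g1 [:: (x, f)].
  by move=> p; rewrite inE => /eqP -> /=; split; [rewrite -vf | right; rewrite vf].
have [rs [_ Hrs Heq]] := Hgen _ Hm.
have nc : ~ Pgt nu x (component (gr_lincomb rs ms) x).
  move=> Hc; have := Pgt_add vnu (Heq x) Hc; rewrite component1 eqxx subrK.
  by case=> [//|]; rewrite vf ltxx.
have [m min [q qin [Fq Fxq]]] := lincomb_support Hrs Hms nc.
exists q.1; split.
  by apply: gensP => //; apply/flatten_mapP; exists m => //; apply: map_f.
by exists (x - q.1); split => //; rewrite subrK.
Qed.

Definition value_classes (fs : seq R) : seq (seq (G * R)) :=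
  [seq [:: (vR nu f, f)] | f <- fs].

Lemma homogeneous_in_span (fs : seq R) (p : G * R) :
  (forall x, Fset nu Psi g1 x ->
     exists2 f, f \in fs & exists2 s, Fbar nu Psi s & x = s + vR nu f) ->
  (forall f, f \in fs -> f != 0) -> Psi (p.1 - g1) -> Pge nu p.1 p.2 ->
  exists rs, [/\ size rs = size fs, (forall a, a \in rs -> gr_ring_elt nu Psi a) &
                 gr_eq nu [:: p] (gr_lincomb rs (value_classes fs))].
Proof.
case: p => [x y] /= span fs0 px xy; case: (classic (Pgt nu x y)) => [yx|nyx].
  exists (nseq (size fs) [::]); split; first by rewrite size_nseq.
    by move=> b /nseqP[-> _] q.
  move=> g; rewrite lincomb0 /component big_nil subr0 -/(component _ _) component1.
  by case: eqP => [<-//|_]; left.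
have ny : y != 0 by apply/eqP => y0; apply: nyx; left.
have vy : vR nu y = x.
  case: xy => [/eqP|le]; first by rewrite (negbTE ny).
  by apply/eqP; apply: contra_notT nyx => ne; right; rewrite lt_def ne le.
have Fx : Fset nu Psi g1 x by exists y; split; [split; [apply/eqP | rewrite vy] | ].
have [f fin [s /FbarP[h [nh ph vh]] exs]] := span x Fx.
have nf := fs0 f fin; have nhf : h * f != 0 by rewrite mulf_neq0.
have [r yr] : exists r, Pgt nu x (y - r * (h * f)).
  by rewrite -{1}vy; apply: residue_approx; rewrite // vR_mul // vh vy exs.
have [|rs [szrs rs_single rsE]] :=
  lincomb_single [:: (vR nu h, r * h)] (_ : index f fs < size (value_classes fs))%N.
  by rewrite size_map index_mem.
exists rs; split; first by rewrite szrs size_map.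
  move=> b /rs_single[-> q //|-> q]; rewrite inE => /eqP -> /=.
  split; [by [] | exact: vR_ge0 |].
  have [->|nr] := eqVneq r 0; first by rewrite mul0r; left.
  by right; rewrite vR_mul // -[X in X <= _]add0r; apply: og_leD2r => //; apply: vR_ge0.
move=> g; rewrite rsE /value_classes (nth_map 0) ?index_mem // nth_index //=.
rewrite !component1 vh -exs; case: eqP => [<-|_]; last by rewrite subr0; left.
by rewrite -mulrA.
Qed.

Lemma module_elt_in_span (fs : seq R) (m : seq (G * R)) :
  (forall x, Fset nu Psi g1 x ->
     exists2 f, f \in fs & exists2 s, Fbar nu Psi s & x = s + vR nu f) ->
  (forall f, f \in fs -> f != 0) -> gr_mod_elt nu Psi g1 m ->
  exists rs, [/\ size rs = size fs, (forall a, a \in rs -> gr_ring_elt nu Psi a) &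
                 gr_eq nu m (gr_lincomb rs (value_classes fs))].
Proof.
move=> span fs0; elim: m => [|p m IH] Hm.
  exists (nseq (size fs) [::]); split; first by rewrite size_nseq.
    by move=> b /nseqP[-> _] q.
  by move=> g; rewrite lincomb0 /component !big_nil subr0; left.
have [rs' [szrs' rs'_ring eqm]] := IH (fun q qin => Hm q (mem_behead (s := p :: m) qin)).
have [px pge] := Hm p (mem_head _ _).
have [rs [szrs rs_ring eqp]] := homogeneous_in_span span fs0 px pge.
exists [seq pr.1 ++ pr.2 | pr <- zip rs rs']; split.
- by rewrite size_map size_zip szrs szrs' minnn.
- move=> b /mapP[[b1 b2] /mem_zipP[b1in b2in] ->] q /=.
  by rewrite mem_cat => /orP[]; [apply: rs_ring b1in q | apply: rs'_ring b2in q].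
- by rewrite -cat1s; apply: gr_eq_lincomb_cat; rewrite ?size_map.
Qed.

(* F_{gamma_1} generated by finitely many values nu(f) over Fbar: the
   classes of these f generate the graded module *)
Lemma module_fg_of_semigroup_fg :
  sg_module_fg (Fbar nu Psi) (Fset nu Psi g1) -> gr_module_fg nu Psi g1.
Proof.
move=> [_ [gens [Fgens gensP]]].
have [fs [fs_nu1 fs_gens]] := exists_witnesses
  (Q := fun d f => vR nu f = d) (P := nu1_eq nu Psi g1) Fgens.
have span x : Fset nu Psi g1 x ->
    exists2 f, f \in fs & exists2 s, Fbar nu Psi s & x = s + vR nu f.
  move=> /gensP[d [din [s [Fs ->]]]]; have [f [fin vf]] := fs_gens d din.
  by exists f => //; exists s; rewrite ?vf.
have fs0 f : f \in fs -> f != 0 by move=> /fs_nu1[/eqP].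
exists (value_classes fs); split; last first.
  by move=> m /(module_elt_in_span span fs0)[rs [szrs]]; exists rs; rewrite size_map.
move=> m /mapP[f /fs_nu1[_ pf] ->] p; rewrite inE => /eqP -> /=.
by split => //; right.
Qed.

End Characterization.

Theorem mainTheorem1 (G : porderZmodType) (R : idomainType)
  (nu : {fraction R} -> G) (Psi : G -> Prop) (g1 : G) :
  noetherian R -> local_ring R ->
  ordered_group G -> finite_rank G ->
  valuation nu -> value_group nu -> centered_residually_rational nu ->
  smallest_nonzero_convex Psi ->
  (gr_module_fg nu Psi g1 <-> sg_module_fg (Fbar nu Psi) (Fset nu Psi g1)).
Proof.
(* only the subgroup property of Psi is used *)
move=> _ _ oG _ vnu _ cnu [[subPsi _] _ _].
split; [exact: semigroup_fg_of_module_fg | exact: module_fg_of_semigroup_fg].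
Qed.
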